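(* Let $n\ge3$ and $i\ge0$. If $x^\Lambda\partial_k\in\mathcal{L}_i$, then $r_i>\mathrm{WD}(x^\Lambda\partial_k)$. In particular, if $1\le k<n-r_i+1$, then $\mathcal{L}_i\cap\mathcal{B}_k=\emptyset$.
   Context: Fix an integer $n\ge 3$. A partition is a sequence $\Lambda=(\lambda_j)_{j\ge1}$ of non-negative integers with finite support; $\mathrm{wt}(\Lambda)=\sum_j j\lambda_j$; $\mathrm{Part}(k)$ is the set of partitions with $\lambda_j=0$ for $j>k$. Write $x^\Lambda=\prod_j x_j^{\lambda_j}$, $\deg(x^\Lambda)=\sum_j\lambda_j$. $\mathcal{B}=\{x^\Lambda\partial_k : 1\le k\le n,\ \Lambda\in\mathrm{Part}(k-1)\}$ and $\mathcal{B}_u=\{x^\Lambda\partial_k\in\mathcal{B}: k=u\}$. For an integer $i\ge-1$, let $r_i\in\{1,\dots,n-1\}$ with $i\equiv r_i\pmod{n-1}$ and $h_i=\lfloor (i-1)/(n-1)\rfloor+1$. Define $\mathrm{WD}(x^\Lambda\partial_k)=\mathrm{wt}(\Lambda)-\deg(x^\Lambda)+n-k$ and $\mathrm{lev}_i(x^\Lambda\partial_k)=h_i\,\mathrm{WD}(x^\Lambda\partial_k)+\deg(x^\Lambda)-1$. For $i\ge-1$, $\mathcal{N}_i=\{b\in\mathcal{B}: \mathrm{lev}_j(b)\le j\text{ for some integer } -1\le j\le i\}$, and $\mathcal{L}_i=\mathcal{N}_i\setminus\mathcal{N}_{i-1}$ for $i\ge0$. *)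

From mathcomp Require Import all_boot all_order all_algebra.
Set Implicit Arguments. Unset Strict Implicit. Unset Printing Implicit Defensive.
Import Order.TTheory GRing.Theory Num.Theory.
Local Open Scope ring_scope.

(* A partition Lambda = (lambda_j)_{j>=1} is represented by a finite list
   [lam] with lambda_j = nth 0 lam (j-1) (entries beyond the list are 0).
   A basis element x^Lambda d_k is represented by the pair (k, lam). *)

Definition inPart (m : nat) (lam : seq nat) : Prop :=
  forall j : nat, (m <= j)%N -> nth 0%N lam j = 0%N.

Definition wt (lam : seq nat) : nat :=
  (\sum_(j < size lam) (j.+1 * nth 0%N lam j))%N.

Definition deg (lam : seq nat) : nat := sumn lam.

Definition inB (n k : nat) (lam : seq nat) : Prop :=
  (1 <= k <= n)%N /\ inPart (k - 1) lam.

(* r_i \in {1,...,n-1}, r_i = i mod (n-1) *)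
Definition r_ (n : nat) (i : int) : int := ((i - 1) %% (n - 1)%:Z)%Z + 1.

Definition h_ (n : nat) (i : int) : int := ((i - 1) %/ (n - 1)%:Z)%Z + 1.

Definition WD (n k : nat) (lam : seq nat) : int :=
  (wt lam)%:Z - (deg lam)%:Z + n%:Z - k%:Z.

Definition lev (n : nat) (i : int) (k : nat) (lam : seq nat) : int :=
  h_ n i * WD n k lam + (deg lam)%:Z - 1.

Definition inN (n : nat) (i : int) (k : nat) (lam : seq nat) : Prop :=
  inB n k lam /\ exists j : int, -1 <= j /\ j <= i /\ lev n j k lam <= j.

Definition inL (n : nat) (i : int) (k : nat) (lam : seq nat) : Prop :=
  inN n i k lam /\ ~ inN n (i - 1) k lam.

From mathcomp Require Import all_boot all_order all_algebra.
From mathcomp Require Import zify ring.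
Set Implicit Arguments. Unset Strict Implicit. Unset Printing Implicit Defensive.
Import Order.TTheory GRing.Theory Num.Theory.
Local Open Scope ring_scope.

(* An element of L_i has lev_i <= i but lev_j > j for every -1 <= j < i.
   Write i = (h_i - 1)(n-1) + r_i.  For i >= 1 the level j = (h_i - 1)(n-1)
   lies in [0, i) and has h_j = h_i - 1, so lev_j = lev_i - WD; if WD >= r_i
   this gives lev_j <= j, a contradiction.  For i = 0 one has h_0 = h_(-1) = 0
   (here n >= 3 is needed), so lev_0 = lev_(-1) = deg - 1 and minimality forces
   deg = 1; then wt <= k - 1 gives WD <= n - 2 < r_0 = n - 1.
   The second claim follows because WD >= n - k, as wt >= deg. *)

Lemma deg_sum (lam : seq nat) :
  deg lam = (\sum_(j < size lam) nth 0%N lam j)%N.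
Proof. by rewrite /deg sumnE (big_nth 0%N) big_mkord. Qed.

Lemma deg_le_wt (lam : seq nat) : (deg lam <= wt lam)%N.
Proof. by rewrite deg_sum /wt; apply: leq_sum => j _; rewrite mulSn leq_addr. Qed.

Lemma wt_le_mul_deg (m : nat) (lam : seq nat) :
  inPart m lam -> (wt lam <= m * deg lam)%N.
Proof.
move=> lamP; rewrite deg_sum /wt big_distrr /=; apply: leq_sum => j _.
have [jm | mj] := ltnP j m; first by rewrite leq_mul2r jm orbT.
by rewrite lamP // muln0.
Qed.

Lemma WD_ge (n k : nat) (lam : seq nat) : n%:Z - k%:Z <= WD n k lam.
Proof. by have := deg_le_wt lam; rewrite /WD; lia. Qed.

Lemma WD_le_deg1 (n k : nat) (lam : seq nat) :
  inB n k lam -> deg lam = 1%N -> WD n k lam <= n%:Z - 2.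
Proof.
move=> [/andP [k_ge1 _] lamP] deg1.
have := wt_le_mul_deg lamP; rewrite /WD deg1 muln1; lia.
Qed.

Section Levels.

Variable n : nat.

Let d : int := (n - 1)%N%:Z.

Lemma h_affine (i q s : int) :
  i = q * d + s + 1 -> 0 <= s < d -> h_ n i = q + 1.
Proof.
by move=> -> s_range; rewrite /h_ -/d addrK divzMDl ?divz_small ?addr0 //; lia.
Qed.

Lemma r_affine (i q s : int) :
  i = q * d + s + 1 -> 0 <= s < d -> r_ n i = s + 1.
Proof. by move=> -> s_range; rewrite /r_ -/d addrK modzMDl modz_small. Qed.

Lemma h_r_decomp (i : int) :
  (2 <= n)%N -> i = (h_ n i - 1) * d + r_ n i /\ 1 <= r_ n i <= d.
Proof.
move=> n_ge2; have d_gt0 : 0 < d by rewrite /d; lia.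
have := divz_eq (i - 1) d; have := modz_ge0 (i - 1) (lt0r_neq0 d_gt0).
have := ltz_pmod (i - 1) d_gt0; rewrite /h_ /r_ -/d addrK.
move=> mod_lt mod_ge0 decomp; split; first lia.
by apply/andP; split; lia.
Qed.

End Levels.

Lemma inL_lev_le (n : nat) (i : int) (k : nat) (lam : seq nat) :
  inL n i k lam -> lev n i k lam <= i.
Proof.
move=> [[lamB [j [j_ge [j_le lev_j]]]] notN].
have -> : i = j; last by [].
apply/eqP; rewrite eq_le j_le andbT leNgt; apply/negP => j_lt.
by apply: notN; split=> //; exists j; do !split=> //; lia.
Qed.

Lemma inL_lev_gt (n : nat) (i : int) (k : nat) (lam : seq nat) (j : int) :
  inL n i k lam -> -1 <= j < i -> j < lev n j k lam.
Proof.
move=> [[lamB _] notN] /andP [j_ge j_lt]; rewrite ltNge; apply/negP => lev_j.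
by apply: notN; split=> //; exists j; do !split=> //; lia.
Qed.

Lemma lev_h_succ (n : nat) (i j : int) (k : nat) (lam : seq nat) :
  h_ n i = h_ n j + 1 -> lev n i k lam = lev n j k lam + WD n k lam.
Proof. by rewrite /lev => ->; ring. Qed.

Lemma WD_lt_r_pos (n : nat) (i : int) (k : nat) (lam : seq nat) :
  (2 <= n)%N -> 0 < i -> inL n i k lam -> WD n k lam < r_ n i.
Proof.
move=> n_ge2 i_gt0 lamL.
have [i_eq /andP [r_ge1 r_le]] := h_r_decomp i n_ge2.
set d : int := (n - 1)%N%:Z in i_eq r_le; set q := h_ n i - 1 in i_eq.
have q_ge0 : 0 <= q by nia.
have h_qd : h_ n (q * d) = q.
  by rewrite (@h_affine n _ (q - 1) (d - 1)) ?subrK //; [ring | lia].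
rewrite ltNge; apply/negP => r_le_WD.
have := inL_lev_gt lamL (j := q * d); have := inL_lev_le lamL.
rewrite (@lev_h_succ n i (q * d)) ?h_qd ?subrK //; nia.
Qed.

Lemma WD_lt_r_0 (n k : nat) (lam : seq nat) :
  (3 <= n)%N -> inL n 0 k lam -> WD n k lam < r_ n 0.
Proof.
move=> n_ge3 lamL.
set d : int := (n - 1)%N%:Z.
have zero_eq : 0 = -1 * d + (d - 1) + 1 by ring.
have r0 : r_ n 0 = d by rewrite (r_affine zero_eq) ?subrK //; lia.
have h0 : h_ n 0 = 0 by rewrite (h_affine zero_eq) //; lia.
have hN1 : h_ n (-1) = 0 by rewrite (@h_affine n _ (-1) (d - 2)) //; [ring | lia].
have deg1 : deg lam = 1%N.
  have := inL_lev_le lamL; have := inL_lev_gt lamL (j := -1).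
  by rewrite /lev h0 hN1 !mul0r add0r; lia.
have := WD_le_deg1 lamL.1.1 deg1; rewrite r0 /d; lia.
Qed.

Lemma WD_lt_r (n : nat) (i : int) (k : nat) (lam : seq nat) :
  (3 <= n)%N -> 0 <= i -> inL n i k lam -> WD n k lam < r_ n i.
Proof.
move=> n_ge3; rewrite le_eqVlt => /predU1P [<- | i_gt0]; first exact: WD_lt_r_0.
by apply: WD_lt_r_pos => //; lia.
Qed.

Theorem proposition2p9 (n : nat) (i : int) :
  (3 <= n)%N -> 0 <= i ->
  (forall (k : nat) (lam : seq nat),
      inL n i k lam -> WD n k lam < r_ n i) /\
  (forall (k : nat), (1 <= k)%N -> k%:Z < n%:Z - r_ n i + 1 ->
      forall lam : seq nat, ~ (inB n k lam /\ inL n i k lam)).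
Proof.
move=> n_ge3 i_ge0; split=> [k lam | k _ k_lt lam [_ lamL]]; first exact: WD_lt_r.
by have := WD_lt_r n_ge3 i_ge0 lamL; have := WD_ge n k lam; lia.
Qed.
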